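(* Under the hypotheses of the following setting: $K=\begin{bmatrix} A & B^T\\ B & -C\end{bmatrix}$ with $A\in\mathbb{R}^{m\times m}$ symmetric positive definite, $B\in\mathbb{R}^{n\times m}$ of rank $n$, $C\in\mathbb{R}^{n\times n}$ symmetric positive semidefinite, $K=LJ_{m+n}L^T$ a generalized Cholesky factorization, and $\Delta K$ symmetric with $\|L^{-1}\|_2^2\|\Delta K\|_F<\tfrac12$, there is a generalized Cholesky factorization $K+\Delta K=(L+\Delta L)J_{m+n}(L+\Delta L)^T$ such that $$\|L^{-1}\Delta L\|_F\le \frac{1}{\sqrt2}\left(1-\sqrt{1-2\|L^{-1}\|_2^2\|\Delta K\|_F}\right).$$
   Context: $J_{m+n}=\begin{bmatrix} I_m&0\\0&-I_n\end{bmatrix}$. A generalized Cholesky factorization of $M\in\mathbb{R}^{(m+n)\times(m+n)}$ is $M=LJ_{m+n}L^T$ with $L=\begin{bmatrix}L_{11}&0\\L_{21}&L_{22}\end{bmatrix}$, $L_{11}\in\mathbb{R}^{m\times m}$, $L_{22}\in\mathbb{R}^{n\times n}$ nonsingular lower triangular, $L_{21}\in\mathbb{R}^{n\times m}$. $\|\cdot\|_2$ is the spectral norm and $\|\cdot\|_F$ the Frobenius norm. *)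

From HB Require Import structures.
From mathcomp Require Import all_boot all_order all_algebra.
Set Implicit Arguments. Unset Strict Implicit. Unset Printing Implicit Defensive.
Import Order.TTheory GRing.Theory Num.Theory.
Local Open Scope ring_scope.

Section Defs.
Variable R : rcfType.

Definition vnorm2 k (x : 'cV[R]_k) : R := \sum_(i < k) x i 0 ^+ 2.

Definition frob p q (M : 'M[R]_(p, q)) : R :=
  Num.sqrt (\sum_(i < p) \sum_(j < q) M i j ^+ 2).

(* s is the spectral norm of M: s = max_{x <> 0} ||Mx||_2/||x||_2
   (the maximum is attained; for q = 0 the norm is 0). *)
Definition is_spectral_norm p q (M : 'M[R]_(p, q)) (s : R) : Prop :=
  0 <= s /\
  (forall x : 'cV[R]_q, vnorm2 (M *m x) <= s ^+ 2 * vnorm2 x) /\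
  (s = 0 \/ exists x : 'cV[R]_q, x != 0 /\ vnorm2 (M *m x) = s ^+ 2 * vnorm2 x).

Definition sym_mx k (M : 'M[R]_k) : Prop := M^T = M.

Definition posdef k (M : 'M[R]_k) : Prop :=
  sym_mx M /\ forall x : 'cV[R]_k, x != 0 -> 0 < (x^T *m M *m x) 0 0.

Definition psd k (M : 'M[R]_k) : Prop :=
  sym_mx M /\ forall x : 'cV[R]_k, 0 <= (x^T *m M *m x) 0 0.

Definition lower_tri k (M : 'M[R]_k) : Prop :=
  forall i j : 'I_k, (i < j)%N -> M i j = 0.

Definition Jmx m n : 'M[R]_(m + n) := block_mx 1%:M 0 0 (- 1%:M).

Definition gen_chol m n (M L : 'M[R]_(m + n)) : Prop :=
  exists (L11 : 'M[R]_m) (L21 : 'M[R]_(n, m)) (L22 : 'M[R]_n),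
    L = block_mx L11 0 L21 L22 /\
    lower_tri L11 /\ lower_tri L22 /\
    L11 \in unitmx /\ L22 \in unitmx /\
    M = L *m Jmx m n *m L^T.

End Defs.

(* Normalizing by [L], put [E := L^-1 dK L^-T], so that [|E|_F <= |L^-1|_2^2 |dK|_F < 1/2].
   It suffices to find a lower triangular [Y] with positive diagonal such that
   [Y J Y^T = J + E] and [sqrt 2 |Y - 1|_F <= 1 - sqrt (1 - 2 |E|_F)]; then
   [dL := L (Y - 1)].  The factor [Y] is built by bordering, one row at a time:
   the off-diagonal part of the new row solves a triangular system and its
   diagonal entry is the square root of a pivot.  For lower triangular [X],
   [|X J + J X^T|_F >= sqrt 2 |X|_F], so [X J + J X^T + X J X^T = E] forces
   [sqrt 2 x <= |E|_F + x^2] with [x = |X|_F]; as long as [2 x^2 <= 1] this pins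
   [x] below the smaller root, and a real estimate shows that this smallness
   survives each bordering step. *)

From HB Require Import structures.
From mathcomp Require Import all_boot all_order all_algebra.
From mathcomp Require Import ring lra.
Set Implicit Arguments. Unset Strict Implicit. Unset Printing Implicit Defensive.
Import Order.TTheory GRing.Theory Num.Theory.
Local Open Scope ring_scope.

Section RealInequalities.
Variable R : rcfType.
Implicit Types u x e p q w c : R.

Lemma sqrt2_ge43 : 4 / 3 <= Num.sqrt (2 : R).
Proof.
have s0 : 0 <= Num.sqrt (2 : R) by exact: sqrtr_ge0.
have s2 : Num.sqrt (2 : R) ^+ 2 = 2 by rewrite sqr_sqrtr.
nra.
Qed.

Lemma bordering_poly_le u : 0 <= u -> u <= 1 ->
  u * (2 - u ^+ 2) * ((4 - (1 + 3 * u) ^+ 2) * (1 + 3 * u) ^+ 2 + 16 * u ^+ 2 * (2 - u ^+ 2))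
  <= (1 - u) ^+ 2 * (u + 2) * (1 + 3 * u) ^+ 4.
Proof.
move=> u0 u1; rewrite -subr_ge0.
have -> : (1 - u) ^+ 2 * (u + 2) * (1 + 3 * u) ^+ 4
    - u * (2 - u ^+ 2) * ((4 - (1 + 3 * u) ^+ 2) * (1 + 3 * u) ^+ 2 + 16 * u ^+ 2 * (2 - u ^+ 2))
  = 2 + 15 * u + 48 * u ^+ 2 + 30 * u ^+ 3 + 78 * u ^+ 4 + u ^+ 5 * (19 - 16 * u ^+ 2) by ring.
have u2 : u ^+ 2 <= 1 by rewrite expr_le1.
have := exprn_ge0 2 u0; have := exprn_ge0 3 u0; have := exprn_ge0 4 u0.
have : 0 <= u ^+ 5 * (19 - 16 * u ^+ 2) by rewrite mulr_ge0 ?exprn_ge0 //; lra.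
lra.
Qed.

Lemma bordering_quad_le u p q w : 0 <= u -> u <= 1 -> 0 <= p -> 0 <= q -> 0 <= w ->
  8 * p ^+ 2 + 4 * q ^+ 2 <= u ^+ 2 * (2 - u ^+ 2) -> w * (1 + 3 * u) <= 4 * p ->
  w ^+ 2 + (q + w ^+ 2) ^+ 2 <= u - u ^+ 2 / 2.
Proof.
move=> u0 u1 p0 q0 w0 hpq hw.
set E := 1 + 3 * u in hw *.
have E0 : 0 < E by rewrite /E; lra.
have E2 : 0 < E ^+ 2 by rewrite exprn_gt0.
have hw2 : w ^+ 2 * E ^+ 2 <= 16 * p ^+ 2.
  have : 0 <= w * E by rewrite mulr_ge0 // ltW.
  nra.
have hqw : (q + w ^+ 2) ^+ 2 <= 2 * q ^+ 2 + 2 * (w ^+ 2) ^+ 2.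
  rewrite -subr_ge0.
  have -> : 2 * q ^+ 2 + 2 * (w ^+ 2) ^+ 2 - (q + w ^+ 2) ^+ 2 = (q - w ^+ 2) ^+ 2 by ring.
  exact: sqr_ge0.
suff : w ^+ 2 * (1 - E ^+ 2 / 4 + 2 * w ^+ 2) <= u * (1 - u) ^+ 2 * (u + 2) / 2 by nra.
set W := 2 * u ^+ 2 * (2 - u ^+ 2) / E ^+ 2.
set a := 1 - E ^+ 2 / 4.
have hW : w ^+ 2 <= W by rewrite /W ler_pdivlMr //; nra.
have w20 : 0 <= w ^+ 2 by rewrite exprn_ge0.
have hr : 0 <= u * (1 - u) ^+ 2 * (u + 2) / 2.
  by rewrite divr_ge0 // mulr_ge0 ?mulr_ge0 ?sqr_ge0 //; lra.
have w_to_W : w ^+ 2 * (a + 2 * w ^+ 2) <= w ^+ 2 * (a + 2 * W) by nra.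
have [aW_le0|aW_gt0] := lerP (a + 2 * W) 0; first by nra.
suff : W * (a + 2 * W) <= u * (1 - u) ^+ 2 * (u + 2) / 2 by nra.
have -> : W * (a + 2 * W) =
    u ^+ 2 * (2 - u ^+ 2) * ((4 - E ^+ 2) * E ^+ 2 + 16 * u ^+ 2 * (2 - u ^+ 2)) / (2 * E ^+ 4).
  by rewrite /W /a; field; rewrite gt_eqF.
rewrite ler_pdivrMr; last by rewrite mulr_gt0 // exprn_gt0.
have := ler_wpM2l u0 (bordering_poly_le u0 u1); rewrite -/E.
have -> : u ^+ 2 * (2 - u ^+ 2) * ((4 - E ^+ 2) * E ^+ 2 + 16 * u ^+ 2 * (2 - u ^+ 2))
    = u * (u * (2 - u ^+ 2) * ((4 - E ^+ 2) * E ^+ 2 + 16 * u ^+ 2 * (2 - u ^+ 2))) by ring.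
lra.
Qed.

(* Of the two roots of [t ^+ 2 - sqrt 2 t + e], [2 * x ^+ 2 <= 1] selects the smaller one. *)
Lemma small_root_bound x e : 0 <= x -> 0 <= e -> e <= 1 / 2 -> 2 * x ^+ 2 <= 1 ->
  Num.sqrt 2 * x <= e + x ^+ 2 -> Num.sqrt 2 * x <= 1 - Num.sqrt (1 - 2 * e).
Proof.
move=> x0 e0 e1 hx h.
have u0 := sqrtr_ge0 (1 - 2 * e).
have uu : Num.sqrt (1 - 2 * e) ^+ 2 = 1 - 2 * e by rewrite sqr_sqrtr //; lra.
set u := Num.sqrt (1 - 2 * e) in u0 uu *.
set y := Num.sqrt 2 * x in h *.
have y0 : 0 <= y by rewrite mulr_ge0 ?sqrtr_ge0.
have y2 : y ^+ 2 = 2 * x ^+ 2 by rewrite exprMn sqr_sqrtr.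
have y1 : y <= 1.
  suff : y ^+ 2 <= 1 ^+ 2 by rewrite ler_sqr ?nnegrE.
  lra.
suff : u ^+ 2 <= (1 - y) ^+ 2 by rewrite ler_sqr ?nnegrE ?subr_ge0 //; lra.
nra.
Qed.

(* In a bordering step, [x], [e], [e'], [p], [q] and [w] are the norms of [Y - 1],
   of the leading blocks of [E] of orders [k] and [k + 1], of the new column of [E],
   of its diagonal entry, and of the solution [z] of [Y J z = v]; the hypothesis
   [w <= p + x w] is read off [J z = v - (Y - 1) J z]. *)
Lemma bordering_real_bound x e e' p q w : 0 <= x -> 0 <= e -> 0 <= e' -> e' < 1 / 2 ->
  Num.sqrt 2 * x <= 1 - Num.sqrt (1 - 2 * e) -> e ^+ 2 + 2 * p ^+ 2 + q ^+ 2 <= e' ^+ 2 ->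
  0 <= p -> 0 <= q -> 0 <= w -> w <= p + x * w ->
  q + w ^+ 2 < 1 /\ x ^+ 2 + w ^+ 2 + (q + w ^+ 2) ^+ 2 <= 1 / 2.
Proof.
move=> x0 e0 e'0 e'1 hx he p0 q0 w0 hw.
have ee' : e <= e'.
  have : e ^+ 2 <= e' ^+ 2 by have := sqr_ge0 p; have := sqr_ge0 q; lra.
  by rewrite ler_sqr ?nnegrE.
have u0 := sqrtr_ge0 (1 - 2 * e).
have uu : Num.sqrt (1 - 2 * e) ^+ 2 = 1 - 2 * e by rewrite sqr_sqrtr //; lra.
set u := Num.sqrt (1 - 2 * e) in u0 uu hx.
have u1 : u <= 1 by nra.
have s43 := sqrt2_ge43.
have s2 : Num.sqrt (2 : R) ^+ 2 = 2 by rewrite sqr_sqrtr.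
have hx3 : x <= 3 * (1 - u) / 4 by nra.
have hw' : w * (1 + 3 * u) <= 4 * p by nra.
have hpq : 8 * p ^+ 2 + 4 * q ^+ 2 <= u ^+ 2 * (2 - u ^+ 2).
  have -> : u ^+ 2 * (2 - u ^+ 2) = 1 - 4 * e ^+ 2 by rewrite uu; ring.
  nra.
have key := bordering_quad_le u0 u1 p0 q0 w0 hpq hw'.
have hx2 : 2 * x ^+ 2 <= (1 - u) ^+ 2.
  have : 0 <= Num.sqrt 2 * x by rewrite mulr_ge0 ?sqrtr_ge0.
  have : (Num.sqrt 2 * x) ^+ 2 = 2 * x ^+ 2 by rewrite exprMn s2.
  nra.
split; last by nra.
have t0 : 0 <= q + w ^+ 2 by have := sqr_ge0 w; lra.
suff : (q + w ^+ 2) ^+ 2 <= (3 / 4) ^+ 2 by rewrite ler_sqr ?nnegrE //; lra.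
nra.
Qed.

Lemma sqrt1D_sub1_sqr_le c : 0 <= 1 + c -> (Num.sqrt (1 + c) - 1) ^+ 2 <= c ^+ 2.
Proof.
move=> c1; set d := Num.sqrt (1 + c).
have d0 : 0 <= d := sqrtr_ge0 _.
have dd : d ^+ 2 = 1 + c by rewrite sqr_sqrtr.
clearbody d; have -> : c = (d - 1) * (d + 1) by rewrite -[c](addKr 1) -dd; ring.
rewrite exprMn ler_peMr ?sqr_ge0 // -[1](expr1n _ 2) ler_sqr ?nnegrE //; lra.
Qed.

End RealInequalities.

Section Frobenius.
Variable R : rcfType.

Lemma sum_sqr_ge0 (I : finType) (a : I -> R) : 0 <= \sum_i a i ^+ 2.
Proof. by apply: sumr_ge0 => i _; exact: sqr_ge0. Qed.

Lemma cauchy_schwarz (I : finType) (a b : I -> R) :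
  (\sum_i a i * b i) ^+ 2 <= (\sum_i a i ^+ 2) * (\sum_i b i ^+ 2).
Proof.
set A := \sum_i a i ^+ 2; set B := \sum_i b i ^+ 2; set C := \sum_i a i * b i.
have lagrange : \sum_i \sum_j (a i * b j - a j * b i) ^+ 2 = 2 * (A * B - C ^+ 2).
  transitivity (\sum_i (a i ^+ 2 * B + b i ^+ 2 * A - 2 * (a i * b i) * C)).
    apply: eq_bigr => i _; rewrite /A /B /C !mulr_sumr -big_split -sumrB /=.
    by apply: eq_bigr => j _; ring.
  rewrite sumrB big_split /= -!mulr_suml -mulr_sumr -/A -/B -/C; ring.
have : 0 <= \sum_i \sum_j (a i * b j - a j * b i) ^+ 2.
  by apply: sumr_ge0 => i _; exact: sum_sqr_ge0.
rewrite lagrange; lra.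
Qed.

Lemma minkowski (I : finType) (a b : I -> R) :
  Num.sqrt (\sum_i (a i + b i) ^+ 2) <=
    Num.sqrt (\sum_i a i ^+ 2) + Num.sqrt (\sum_i b i ^+ 2).
Proof.
have hA := sum_sqr_ge0 a; have hB := sum_sqr_ge0 b.
set sA := Num.sqrt (\sum_i a i ^+ 2); set sB := Num.sqrt (\sum_i b i ^+ 2).
have sA0 : 0 <= sA := sqrtr_ge0 _; have sB0 : 0 <= sB := sqrtr_ge0 _.
rewrite -ler_sqr ?nnegrE ?addr_ge0 ?sqrtr_ge0 // sqr_sqrtr ?sum_sqr_ge0 //.
have -> : \sum_i (a i + b i) ^+ 2 = \sum_i a i ^+ 2 + \sum_i b i ^+ 2 + 2 * \sum_i a i * b i.
  by rewrite mulr_sumr -!big_split /=; apply: eq_bigr => i _; ring.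
have hC : \sum_i a i * b i <= sA * sB.
  rewrite -sqrtrM // (le_trans (ler_norm _)) // -sqrtr_sqr ler_sqrt ?mulr_ge0 //.
  exact: cauchy_schwarz.
have sAA : sA ^+ 2 = \sum_i a i ^+ 2 by rewrite sqr_sqrtr.
have sBB : sB ^+ 2 = \sum_i b i ^+ 2 by rewrite sqr_sqrtr.
nra.
Qed.

Definition frob2 p q (M : 'M[R]_(p, q)) : R := \sum_i \sum_j M i j ^+ 2.

Lemma frobE p q (M : 'M[R]_(p, q)) : frob M = Num.sqrt (frob2 M).
Proof. by []. Qed.

Lemma frob2_ge0 p q (M : 'M[R]_(p, q)) : 0 <= frob2 M.
Proof. by apply: sumr_ge0 => i _; exact: sum_sqr_ge0. Qed.

Lemma frob_ge0 p q (M : 'M[R]_(p, q)) : 0 <= frob M.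
Proof. exact: sqrtr_ge0. Qed.

Lemma frob_sqr p q (M : 'M[R]_(p, q)) : frob M ^+ 2 = frob2 M.
Proof. by rewrite sqr_sqrtr // frob2_ge0. Qed.

Lemma frob0 p q : frob (0 : 'M[R]_(p, q)) = 0.
Proof.
rewrite /frob big1 ?sqrtr0 // => i _.
by rewrite big1 // => j _; rewrite mxE expr0n.
Qed.

Lemma frob2_tr p q (M : 'M[R]_(p, q)) : frob2 M^T = frob2 M.
Proof. by rewrite /frob2 exchange_big; do 2!apply: eq_bigr => ? _; rewrite mxE. Qed.

Lemma frob_tr p q (M : 'M[R]_(p, q)) : frob M^T = frob M.
Proof. by rewrite !frobE frob2_tr. Qed.

Lemma frob2N p q (M : 'M[R]_(p, q)) : frob2 (- M) = frob2 M.
Proof. by do 2!apply: eq_bigr => ? _; rewrite mxE sqrrN. Qed.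

Lemma ler_frobD p q (M N : 'M[R]_(p, q)) : frob (M + N) <= frob M + frob N.
Proof.
rewrite /frob !pair_bigA /=.
under eq_bigr do rewrite mxE.
exact: (minkowski (fun ij : 'I_p * 'I_q => M ij.1 ij.2) (fun ij => N ij.1 ij.2)).
Qed.

Lemma ler_frobB p q (M N : 'M[R]_(p, q)) : frob (M - N) <= frob M + frob N.
Proof. by rewrite [frob N]frobE -frob2N; exact: ler_frobD. Qed.

Lemma ler_frob2M p q r (M : 'M[R]_(p, q)) (N : 'M[R]_(q, r)) :
  frob2 (M *m N) <= frob2 M * frob2 N.
Proof.
rewrite /frob2 mulr_suml; apply: ler_sum => i _.
rewrite [X in _ <= _ * X]exchange_big mulr_sumr.
by apply: ler_sum => j _; rewrite mxE; exact: cauchy_schwarz.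
Qed.

Lemma ler_frobM p q r (M : 'M[R]_(p, q)) (N : 'M[R]_(q, r)) :
  frob (M *m N) <= frob M * frob N.
Proof. by rewrite !frobE -sqrtrM ?frob2_ge0 // ler_sqrt ?mulr_ge0 ?frob2_ge0 ?ler_frob2M. Qed.

Lemma ler_frob2_spectral p q r (M : 'M[R]_(p, q)) (N : 'M[R]_(q, r)) s :
  is_spectral_norm M s -> frob2 (M *m N) <= s ^+ 2 * frob2 N.
Proof.
move=> [_ [hs _]].
rewrite /frob2 exchange_big [X in _ <= _ * X]exchange_big mulr_sumr.
apply: ler_sum => j _.
have -> : \sum_i (M *m N) i j ^+ 2 = vnorm2 (M *m col j N).
  by apply: eq_bigr => i _; rewrite !mxE; congr (_ ^+ 2); apply: eq_bigr => l _; rewrite mxE.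
have -> : \sum_i N i j ^+ 2 = vnorm2 (col j N) by apply: eq_bigr => i _; rewrite mxE.
exact: hs.
Qed.

End Frobenius.

Lemma is_trig_mxM (R : pzSemiRingType) n (A B : 'M[R]_n) :
  is_trig_mx A -> is_trig_mx B -> is_trig_mx (A *m B).
Proof.
move=> /is_trig_mxP At /is_trig_mxP Bt; apply/is_trig_mxP => a b ab.
rewrite mxE big1 // => l _; have [al|la] := ltnP a l; first by rewrite At ?mul0r.
by rewrite Bt ?mulr0 // (leq_ltn_trans la ab).
Qed.

Lemma trig_diag_gt0_unitmx (R : numFieldType) n (A : 'M[R]_n) :
  is_trig_mx A -> (forall i, 0 < A i i) -> A \in unitmx.
Proof. by move=> At Ap; rewrite unitmxE det_trig // unitfE gt_eqF // prodr_gt0. Qed.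

Lemma is_trig_mxB (R : pzRingType) n (A B : 'M[R]_n) :
  is_trig_mx A -> is_trig_mx B -> is_trig_mx (A - B).
Proof.
move=> /is_trig_mxP At /is_trig_mxP Bt; apply/is_trig_mxP => a b ab.
by rewrite !mxE At // Bt // subrr.
Qed.

Section Signature.
Variables (R : rcfType) (N : nat) (j : 'rV[R]_N).
Hypothesis j_sqr : forall i, j 0 i ^+ 2 = 1.
Local Notation J := (diag_mx j).

Lemma signature_neq0 i : j 0 i != 0.
Proof. by apply: contra_eq_neq (j_sqr i) => ->; rewrite expr0n eq_sym oner_neq0. Qed.

Lemma signature_norm i : `|j 0 i| = 1.
Proof. by apply/eqP; rewrite -sqr_norm_eq1 j_sqr. Qed.

Lemma frob2_mulmx_signature p (A : 'M[R]_(p, N)) : frob2 (A *m J) = frob2 A.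
Proof. by rewrite mul_mx_diag; do 2!apply: eq_bigr => ? _; rewrite mxE exprMn j_sqr mulr1. Qed.

Lemma frob2_signature_mulmx p (A : 'M[R]_(N, p)) : frob2 (J *m A) = frob2 A.
Proof. by rewrite mul_diag_mx; do 2!apply: eq_bigr => ? _; rewrite mxE exprMn j_sqr mul1r. Qed.

Lemma signature_formE (A B : 'M[R]_N) a b :
  (A *m J *m B^T) a b = \sum_l A a l * j 0 l * B b l.
Proof. by rewrite mxE; apply: eq_bigr => l _; rewrite mul_mx_diag !mxE. Qed.

(* For triangular [X], every off-diagonal pair [{X a b, X b a}] contains a zero,
   so no cancellation occurs in [X J + J X^T]. *)
Lemma frob2_trig_symJ_ge (X : 'M[R]_N) : is_trig_mx X ->
  2 * frob2 X <= frob2 (X *m J + J *m X^T).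
Proof.
move=> /is_trig_mxP Xt; set S := X *m J + J *m X^T.
have SE a b : S a b = X a b * j 0 b + j 0 a * X b a.
  by rewrite /S mul_mx_diag mul_diag_mx !mxE.
have pair_le a b : 2 * (X a b ^+ 2 + X b a ^+ 2) <= S a b ^+ 2 + S b a ^+ 2.
  rewrite !SE; have [hab|hba|/val_inj <-] := ltngtP a b.
  - rewrite (Xt a b hab) mul0r mulr0 add0r addr0 !exprMn j_sqr; lra.
  - rewrite (Xt b a hba) mul0r mulr0 add0r addr0 !exprMn j_sqr; lra.
  - have := j_sqr a; have := sqr_ge0 (X a a); nra.
have sym_sum (M : 'M[R]_N) : \sum_a \sum_b (M a b ^+ 2 + M b a ^+ 2) = frob2 M + frob2 M^T.
  rewrite /frob2 -big_split; apply: eq_bigr => a _.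
  by rewrite -big_split; apply: eq_bigr => b _; rewrite mxE.
have : \sum_a \sum_b 2 * (X a b ^+ 2 + X b a ^+ 2) <= \sum_a \sum_b (S a b ^+ 2 + S b a ^+ 2).
  by apply: ler_sum => a _; apply: ler_sum => b _; exact: pair_le.
have -> : \sum_a \sum_b 2 * (X a b ^+ 2 + X b a ^+ 2) = 2 * (frob2 X + frob2 X^T).
  by rewrite -sym_sum mulr_sumr; apply: eq_bigr => a _; rewrite mulr_sumr.
rewrite sym_sum !frob2_tr; lra.
Qed.

Lemma frob_trig_factor_bound (X F : 'M[R]_N) : is_trig_mx X ->
  (1 + X) *m J *m (1 + X)^T = J + F -> 2 * frob X ^+ 2 <= 1 -> frob F <= 1 / 2 ->
  Num.sqrt 2 * frob X <= 1 - Num.sqrt (1 - 2 * frob F).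
Proof.
move=> Xt hF hX hF1.
have SE : X *m J + J *m X^T = F - X *m J *m X^T.
  have expand : (1 + X) *m J *m (1 + X)^T = J + (X *m J + J *m X^T + X *m J *m X^T).
    by rewrite linearD /= trmx1 mulmxDl mul1mx !mulmxDr mulmx1 !mulmxDl !addrA.
  by move: hF; rewrite expand => /addrI <-; rewrite addrK.
have hS : Num.sqrt 2 * frob X <= frob (X *m J + J *m X^T).
  by rewrite !frobE -sqrtrM // ler_sqrt ?frob2_ge0 ?frob2_trig_symJ_ge.
have hT : frob (X *m J *m X^T) <= frob X ^+ 2.
  by rewrite (le_trans (ler_frobM _ _)) // frob_tr frobE frob2_mulmx_signature -frobE expr2.
apply: small_root_bound (frob_ge0 _) (frob_ge0 _) hF1 hX _.
by rewrite (le_trans hS) // SE (le_trans (ler_frobB _ _)) ?lerD2l.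
Qed.

End Signature.

Section LeadingBlock.
Variables (R : rcfType) (N : nat).
Implicit Types (M : 'M[R]_N) (k : nat).

Definition lead_mx k M : 'M[R]_N :=
  \matrix_(a, b) if (a < k)%N && (b < k)%N then M a b else 0.

Definition border_col (k : 'I_N) M : 'cV[R]_N := \col_a (if (a < k)%N then M a k else 0).

Lemma lead_mx0 M : lead_mx 0 M = 0.
Proof. by apply/matrixP => a b; rewrite !mxE. Qed.

Lemma lead_mx_full M : lead_mx N M = M.
Proof. by apply/matrixP => a b; rewrite mxE !ltn_ord. Qed.

Lemma tr_lead_mx k M : (lead_mx k M)^T = lead_mx k M^T.
Proof. by apply/matrixP => a b; rewrite !mxE andbC. Qed.

Lemma ler_frob_lead_mx k M : frob (lead_mx k M) <= frob M.
Proof.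
rewrite !frobE ler_sqrt ?frob2_ge0 //; apply: ler_sum => a _; apply: ler_sum => b _.
by rewrite mxE; case: ifP => _ //; rewrite expr0n sqr_ge0.
Qed.

Lemma frob2_col (v : 'cV[R]_N) : frob2 v = \sum_a v a 0 ^+ 2.
Proof. by apply: eq_bigr => a _; rewrite big_ord1. Qed.

Lemma sum_delta_mulr (F : 'I_N -> R) (k : 'I_N) : \sum_a (a == k)%:R * F a = F k.
Proof. by rewrite (bigD1 k) //= eqxx mul1r big1 ?addr0 // => a /negbTE ->; rewrite mul0r. Qed.

Lemma ltnS_ord (a k : 'I_N) : (a < k.+1)%N = (a < k)%N || (a == k).
Proof. by rewrite ltnS leq_eqVlt orbC. Qed.

Lemma frob2_lead_mxS (k : 'I_N) M : sym_mx M ->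
  frob2 (lead_mx k.+1 M) = frob2 (lead_mx k M) + 2 * frob2 (border_col k M) + M k k ^+ 2.
Proof.
move=> Msym; have Msym_entry a b : M a b = M b a by rewrite -{1}Msym mxE.
set v := fun a : 'I_N => if (a < k)%N then M a k else 0.
have ltnS_neq (c : 'I_N) : c != k -> (c < k.+1)%N = (c < k)%N.
  by move=> ck; rewrite ltnS_ord (negbTE ck) orbF.
have entry a b : lead_mx k.+1 M a b ^+ 2 = lead_mx k M a b ^+ 2 + (a == k)%:R * v b ^+ 2
    + (b == k)%:R * v a ^+ 2 + (a == k)%:R * ((b == k)%:R * M k k ^+ 2).
{ rewrite !mxE /v.
  case: (eqVneq a k) => [->|ak]; case: (eqVneq b k) => [->|bk].
  - by rewrite ltnSn ltnn /=; ring.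
  - rewrite ltnSn (ltnS_neq _ bk) ltnn /=.
    by case: ifP => _; rewrite ?(Msym_entry b k); ring.
  - rewrite ltnSn (ltnS_neq _ ak) ltnn andbF andbT /=.
    by case: ifP => _; ring.
  - by rewrite (ltnS_neq _ ak) (ltnS_neq _ bk) /=; ring. }
have -> : frob2 (border_col k M) = \sum_b v b ^+ 2.
  by rewrite frob2_col; apply: eq_bigr => b _; rewrite mxE.
rewrite {1}/frob2; under eq_bigr do under eq_bigr do rewrite entry.
under eq_bigr do rewrite !big_split /=.
rewrite !big_split /=.
have -> : \sum_a \sum_b (a == k)%:R * v b ^+ 2 = \sum_b v b ^+ 2.
  by under eq_bigr do rewrite -mulr_sumr; rewrite sum_delta_mulr.
have -> : \sum_a \sum_b (b == k)%:R * v a ^+ 2 = \sum_b v b ^+ 2.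
  by apply: eq_bigr => a _; exact: (sum_delta_mulr (fun=> v a ^+ 2)).
have -> : \sum_a \sum_b (a == k)%:R * ((b == k)%:R * M k k ^+ 2) = M k k ^+ 2.
  by under eq_bigr do rewrite -mulr_sumr sum_delta_mulr; rewrite sum_delta_mulr.
rewrite /frob2; ring.
Qed.

End LeadingBlock.

Section Bordering.
Variables (R : rcfType) (N : nat) (j : 'rV[R]_N) (E : 'M[R]_N) (k : 'I_N) (Y : 'M[R]_N).
Local Notation J := (diag_mx j).
Hypothesis j_sqr : forall i, j 0 i ^+ 2 = 1.
Hypothesis E_sym : sym_mx E.
Hypothesis Y_trig : is_trig_mx Y.
Hypothesis Y_diag_gt0 : forall i, 0 < Y i i.
Hypothesis Y_tail : forall i l : 'I_N, (k <= i)%N -> Y i l = (i == l)%:R.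
Hypothesis Y_gram : Y *m J *m Y^T = J + lead_mx k E.

Definition border_solve : 'cV[R]_N := invmx (Y *m J) *m border_col k E.
Local Notation z := border_solve.

Definition border_pivot : R := j 0 k * (E k k - \sum_l z l 0 ^+ 2 * j 0 l).

Definition next_row (d : R) : 'M[R]_N :=
  \matrix_(a, l) if a == k then (if l == k then d else z l 0) else Y a l.

Lemma border_solveP : Y *m J *m z = border_col k E.
Proof.
apply: mulKVmx; rewrite unitmx_mul trig_diag_gt0_unitmx //=.
rewrite unitmxE det_trig ?diag_mx_is_trig // unitfE; apply/prodf_neq0 => i _.
by rewrite mxE eqxx mulr1n (signature_neq0 j_sqr).
Qed.

Lemma col_k_offdiag_eq0 a : a != k -> Y a k = 0.
Proof.
move=> ak; have [lt_ak|le_ka] := ltnP a k; first by move/is_trig_mxP: Y_trig => ->.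
by rewrite Y_tail // (negbTE ak).
Qed.

Lemma border_solve_tail (l : 'I_N) : (k <= l)%N -> z l 0 = 0.
Proof.
move=> kl; move/matrixP/(_ l 0): border_solveP.
rewrite [RHS]mxE ltnNge kl /= mxE (bigD1 l) //= big1 ?addr0 => [|m /negbTE ml].
  rewrite mul_mx_diag !mxE Y_tail // eqxx mul1r => /eqP.
  by rewrite mulf_eq0 (negbTE (signature_neq0 j_sqr _)) => /eqP.
by rewrite mul_mx_diag !mxE Y_tail // eq_sym ml !mul0r.
Qed.

Lemma next_row_trig d : is_trig_mx (next_row d).
Proof.
apply/is_trig_mxP => a l al; rewrite mxE.
case: (eqVneq a k) => [ak|_]; last by move/is_trig_mxP: Y_trig => ->.
by rewrite -ak -val_eqE /= gtn_eqF // border_solve_tail // -ak ltnW.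
Qed.

Lemma next_row_gram_off d a b : a != k ->
  (next_row d *m J *m (next_row d)^T) a b = (J + lead_mx k.+1 E) a b.
Proof.
move=> ak; rewrite signature_formE.
under eq_bigr do rewrite [next_row d a _]mxE (negbTE ak).
case: (eqVneq b k) => [->|bk].
  transitivity ((Y *m J *m z) a 0).
    rewrite mxE; apply: eq_bigr => l _; rewrite mul_mx_diag !mxE eqxx.
    by case: (eqVneq l k) => [->|//]; rewrite col_k_offdiag_eq0 // !mul0r.
  by rewrite border_solveP !mxE (negbTE ak) ltnS_ord ltnSn (negbTE ak) orbF andbT add0r.
transitivity ((Y *m J *m Y^T) a b).
  by rewrite signature_formE; apply: eq_bigr => l _; rewrite mxE (negbTE bk).
by rewrite Y_gram !mxE !ltnS_ord (negbTE ak) (negbTE bk) !orbF.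
Qed.

Lemma next_row_gram d : d ^+ 2 = 1 + border_pivot ->
  next_row d *m J *m (next_row d)^T = J + lead_mx k.+1 E.
Proof.
move=> dd; apply/matrixP => a b.
case: (eqVneq a k) => [->|ak]; last exact: next_row_gram_off.
case: (eqVneq b k) => [->|bk].
  have sig_off : \sum_l z l 0 ^+ 2 * j 0 l = \sum_(l | l != k) z l 0 * j 0 l * z l 0.
    rewrite (bigD1 k) //= border_solve_tail // expr0n mul0r add0r.
    by apply: eq_bigr => l _; rewrite expr2 mulrAC.
  have -> : (J + lead_mx k.+1 E) k k = j 0 k + E k k by rewrite !mxE eqxx mulr1n ltnSn.
  rewrite signature_formE (bigD1 k) //= [next_row d k k]mxE !eqxx.
  rewrite (eq_bigr (fun l => z l 0 * j 0 l * z l 0)) => [|l /negbTE lk]; last first.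
    by rewrite !mxE eqxx lk.
  rewrite -sig_off mulrAC -expr2 dd /border_pivot mulrDl mul1r mulrAC -expr2 j_sqr mul1r.
  by rewrite -addrA subrK.
have G_sym : (next_row d *m J *m (next_row d)^T)^T = next_row d *m J *m (next_row d)^T.
  by rewrite !trmx_mul trmxK tr_diag_mx mulmxA.
have H_sym : (J + lead_mx k.+1 E)^T = J + lead_mx k.+1 E.
  by rewrite linearD /= tr_diag_mx tr_lead_mx E_sym.
by rewrite -G_sym -H_sym [LHS]mxE [RHS]mxE next_row_gram_off.
Qed.

Lemma frob2_next_row d : frob2 (next_row d - 1) = frob2 (Y - 1) + frob2 z + (d - 1) ^+ 2.
Proof.
have row_k : \sum_l (next_row d - 1) k l ^+ 2 = frob2 z + (d - 1) ^+ 2.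
  rewrite frob2_col [X in _ = X + _](bigD1 k) //= border_solve_tail // expr0n add0r.
  rewrite (bigD1 k) //= addrC !mxE !eqxx /=; congr (_ + _).
  by apply: eq_bigr => l lk; rewrite !mxE eqxx (negbTE lk) eq_sym (negbTE lk) /= subr0.
have Y_row_k : \sum_l (Y - 1) k l ^+ 2 = 0.
  by rewrite big1 // => l _; rewrite !mxE Y_tail // subrr expr0n.
have other_rows : \sum_(a | a != k) \sum_l (next_row d - 1) a l ^+ 2
    = \sum_(a | a != k) \sum_l (Y - 1) a l ^+ 2.
  by apply: eq_bigr => a ak; apply: eq_bigr => l _; rewrite !mxE (negbTE ak).
rewrite /frob2 (bigD1 k) //= [\sum_a \sum_l (Y - 1) a l ^+ 2](bigD1 k) //=.
by rewrite row_k other_rows Y_row_k add0r addrC addrA.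
Qed.

Lemma ler_frob_border_solve :
  frob z <= frob (border_col k E) + frob (Y - 1) * frob z.
Proof.
have Jz : J *m z = border_col k E - (Y - 1) *m (J *m z).
  by rewrite -border_solveP mulmxBl mul1mx -mulmxA opprB addrC subrK.
have fJz : frob (J *m z) = frob z by rewrite !frobE frob2_signature_mulmx.
rewrite -fJz {1}Jz (le_trans (ler_frobB _ _)) // lerD2l; exact: ler_frobM.
Qed.

Lemma ler_border_pivot : `|border_pivot| <= `|E k k| + frob z ^+ 2.
Proof.
rewrite normrM signature_norm // mul1r (le_trans (ler_normB _ _)) // lerD2l.
rewrite frob_sqr frob2_col (le_trans (ler_norm_sum _ _ _)) //; apply: ler_sum => l _.
by rewrite normrM signature_norm // mulr1 normrX real_normK ?num_real.
Qed.

End Bordering.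

Section Factorization.
Variables (R : rcfType) (N : nat) (j : 'rV[R]_N) (E : 'M[R]_N).
Local Notation J := (diag_mx j).
Hypothesis j_sqr : forall i, j 0 i ^+ 2 = 1.
Hypothesis E_sym : sym_mx E.
Hypothesis E_small : frob E < 1 / 2.

Definition partial_factor (k : nat) (Y : 'M[R]_N) : Prop :=
  [/\ is_trig_mx Y, forall i, 0 < Y i i,
      forall i l : 'I_N, (k <= i)%N -> Y i l = (i == l)%:R,
      Y *m J *m Y^T = J + lead_mx k E
    & Num.sqrt 2 * frob (Y - 1) <= 1 - Num.sqrt (1 - 2 * frob (lead_mx k E))].

Lemma partial_factor0 : partial_factor 0 1.
Proof.
split.
- exact: scalar_mx_is_trig.
- by move=> i; rewrite mxE eqxx ltr01.
- by move=> i l _; rewrite mxE.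
- by rewrite mul1mx trmx1 mulmx1 lead_mx0 addr0.
- by rewrite subrr lead_mx0 frob0 !mulr0 subr0 sqrtr1 subrr.
Qed.

Lemma partial_factorS (k : 'I_N) Y : partial_factor k Y ->
  exists Y', partial_factor k.+1 Y'.
Proof.
case=> Y_trig Y_diag Y_tail Y_gram Y_bound.
set z := border_solve j E k Y; set c := border_pivot j E k Y.
have e'_lt : frob (lead_mx k.+1 E) < 1 / 2 by rewrite (le_lt_trans (ler_frob_lead_mx _ _)).
have he : frob (lead_mx k E) ^+ 2 + 2 * frob (border_col k E) ^+ 2 + `|E k k| ^+ 2
    <= frob (lead_mx k.+1 E) ^+ 2.
  by rewrite !frob_sqr frob2_lead_mxS // real_normK ?num_real.
have [small bound] := bordering_real_bound (frob_ge0 _) (frob_ge0 _) (frob_ge0 _) e'_lt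
  Y_bound he (frob_ge0 _) (normr_ge0 _) (frob_ge0 _)
  (ler_frob_border_solve E k j_sqr Y_trig Y_diag).
have hc : `|c| <= `|E k k| + frob z ^+ 2 := ler_border_pivot E k Y j_sqr.
have c_gt : 0 < 1 + c by have := ler_norm (- c); rewrite normrN; lra.
set d := Num.sqrt (1 + c).
have hd : (d - 1) ^+ 2 <= (`|E k k| + frob z ^+ 2) ^+ 2.
  rewrite (le_trans (sqrt1D_sub1_sqr_le (ltW c_gt))) // -real_normK ?num_real //.
  by rewrite lerXn2r ?nnegrE ?(le_trans _ hc).
exists (next_row j E k Y d); split.
- exact: next_row_trig.
- move=> i; rewrite mxE; case: eqP => [_|_]; rewrite ?eqxx ?sqrtr_gt0 //.
- move=> i l ki; rewrite mxE -val_eqE /= gtn_eqF //; exact/Y_tail/ltnW.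
- exact/next_row_gram/sqr_sqrtr/ltW.
- apply: frob_trig_factor_bound => //.
  + exact/is_trig_mxB/scalar_mx_is_trig/next_row_trig.
  + by rewrite addrC subrK; exact/next_row_gram/sqr_sqrtr/ltW.
  + rewrite frob_sqr frob2_next_row // -!frob_sqr; lra.
  + exact: ltW.
Qed.

Lemma partial_factor_exists k : (k <= N)%N -> exists Y, partial_factor k Y.
Proof.
elim: k => [|k IH] kN; first by exists 1; exact: partial_factor0.
have [Y HY] := IH (ltnW kN); exact: (@partial_factorS (Ordinal kN) Y HY).
Qed.

Lemma signature_factorization :
  exists Y, [/\ is_trig_mx Y, forall i, 0 < Y i i,
    Y *m J *m Y^T = J + E
  & Num.sqrt 2 * frob (Y - 1) <= 1 - Num.sqrt (1 - 2 * frob E)].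
Proof.
have [Y [Y_trig Y_diag _]] := partial_factor_exists (leqnn N).
by rewrite lead_mx_full; exists Y.
Qed.

End Factorization.

Section GeneralizedCholesky.
Variable R : rcfType.

Lemma Jmx_diag m n : Jmx R m n = diag_mx (row_mx (const_mx 1) (const_mx (-1))).
Proof.
rewrite /Jmx diag_mx_row !diag_const_mx; congr block_mx.
by apply/matrixP => a b; rewrite !mxE mulNrn.
Qed.

Lemma Jmx_signature_sqr m n (i : 'I_(m + n)) :
  (row_mx (const_mx 1) (const_mx (-1)) : 'rV[R]_(m + n)) 0 i ^+ 2 = 1.
Proof. by case: (split_ordP i) => i' ->; rewrite ?row_mxEl ?row_mxEr mxE ?sqrrN expr1n. Qed.

Lemma ler_frob_congr p q (M : 'M[R]_(p, q)) (D : 'M[R]_q) s :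
  is_spectral_norm M s -> sym_mx D -> frob (M *m D *m M^T) <= s ^+ 2 * frob D.
Proof.
move=> Ms Dsym; have [s0 _] := Ms.
have right_factor : frob2 (D *m M^T) <= s ^+ 2 * frob2 D.
  by rewrite -frob2_tr trmx_mul trmxK Dsym; exact: ler_frob2_spectral Ms.
have : frob2 (M *m D *m M^T) <= (s ^+ 2 * frob D) ^+ 2.
  rewrite -mulmxA (le_trans (ler_frob2_spectral _ Ms)) // exprMn frob_sqr.
  by rewrite [(s ^+ 2) ^+ 2]expr2 -[X in _ <= X]mulrA; apply: ler_wpM2l; rewrite ?sqr_ge0.
by rewrite -frob_sqr ler_sqr ?nnegrE ?mulr_ge0 ?sqr_ge0 ?frob_ge0.
Qed.

Lemma gen_chol_unitmx m n (M L : 'M[R]_(m + n)) : gen_chol M L -> L \in unitmx.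
Proof.
case=> [L11 [L21 [L22 [-> [_ [_ [u11 [u22 _]]]]]]]].
by rewrite unitmxE det_lblock unitfE mulf_neq0 // -unitfE -unitmxE.
Qed.

Lemma gen_chol_mulmx_trig m n (M L Y : 'M[R]_(m + n)) : gen_chol M L ->
  is_trig_mx Y -> (forall i, 0 < Y i i) ->
  gen_chol (L *m (Y *m Jmx R m n *m Y^T) *m L^T) (L *m Y).
Proof.
case=> [L11 [L21 [L22 [hL [t11 [t22 [u11 [u22 _]]]]]]]] Yt Yp.
have Yblk : Y = block_mx (ulsubmx Y) 0 (dlsubmx Y) (drsubmx Y).
  by rewrite -{1}(submxK Y) (ursubmx_trig (leqnn m) Yt).
have Y11t : is_trig_mx (ulsubmx Y) := ulsubmx_trig Yt.
have Y22t : is_trig_mx (drsubmx Y) := drsubmx_trig (leqnn m) Yt.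
have diag_unitmx p (A B : 'M[R]_p) : B \in unitmx -> is_trig_mx A ->
    (forall i, 0 < A i i) -> B *m A \in unitmx.
  by move=> Bu At Ap; rewrite unitmx_mul Bu trig_diag_gt0_unitmx.
exists (L11 *m ulsubmx Y), (L21 *m ulsubmx Y + L22 *m dlsubmx Y), (L22 *m drsubmx Y).
split; first by rewrite hL [in LHS]Yblk mulmx_block !mulmx0 !mul0mx !addr0 add0r.
split; first by apply/is_trig_mxP/is_trig_mxM => //; apply/is_trig_mxP.
split; first by apply/is_trig_mxP/is_trig_mxM => //; apply/is_trig_mxP.
split; first by apply: diag_unitmx => // i; rewrite !mxE.
split; first by apply: diag_unitmx => // i; rewrite !mxE.
by rewrite trmx_mul !mulmxA.
Qed.

End GeneralizedCholesky.

Theorem mainTheorem2 (R : rcfType) (m n : nat)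
  (A : 'M[R]_m) (B : 'M[R]_(n, m)) (C : 'M[R]_n)
  (L dK : 'M[R]_(m + n)) (s : R) :
  posdef A -> \rank B = n -> psd C ->
  gen_chol (block_mx A B^T B (- C)) L ->
  sym_mx dK ->
  is_spectral_norm (invmx L) s ->
  s ^+ 2 * frob dK < 1 / 2 ->
  exists dL : 'M[R]_(m + n),
    gen_chol (block_mx A B^T B (- C) + dK) (L + dL) /\
    frob (invmx L *m dL) <=
      1 / Num.sqrt 2 * (1 - Num.sqrt (1 - 2 * s ^+ 2 * frob dK)).
Proof.
move=> _ _ _ chol dK_sym s_spec small.
have L_unit := gen_chol_unitmx chol.
set E := invmx L *m dK *m (invmx L)^T.
have E_sym : sym_mx E by rewrite /sym_mx !trmx_mul trmxK dK_sym mulmxA.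
have E_le := ler_frob_congr s_spec dK_sym.
have [Y [Y_trig Y_diag Y_gram Y_bound]] :=
  signature_factorization (@Jmx_signature_sqr R m n) E_sym (le_lt_trans E_le small).
rewrite -Jmx_diag in Y_gram.
exists (L *m Y - L); rewrite [L + _]addrC subrK; split.
  have [_ [_ [_ [_ [_ [_ [_ [_ K_eq]]]]]]]] := chol.
  have LEL : L *m E *m L^T = dK.
    by rewrite !mulmxA mulmxV // mul1mx -mulmxA -trmx_mul mulmxV // trmx1 mulmx1.
  rewrite {1}K_eq -LEL -mulmxDl -mulmxDr -Y_gram.
  exact: gen_chol_mulmx_trig chol Y_trig Y_diag.
rewrite mulmxBr mulmxA mulVmx // mul1mx mul1r ler_pdivlMl ?sqrtr_gt0 //.
rewrite (le_trans Y_bound) // lerD2l lerN2 ler_sqrt; last by have := frob_ge0 E; lra.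
nra.
Qed.
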